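(* Let $G$ be a compact group with Haar probability measure $\lambda$ and let $y\in G$. Let $\nu_y=s_y[\lambda]$ be the image of $\lambda$ under $s_y\colon G\to G\times G$, $s_y(x)=(x,x\oplus y)$. Then for every Borel rectangle $A\times B\subseteq G\times G$, $$\nu_y(A\times B)=\lim_{\mathcal E\in\mathcal B}\nu_{y,\mathcal E}(A\times B),$$ and consequently the net $\{\nu_{y,\mathcal E}\}_{\mathcal E\in\mathcal B}$ converges to $\nu_y$ in the weak$^\ast$ topology of $P(G\times G)$.
   Context: $G=(G,\oplus)$ is a compact Hausdorff group with Haar probability measure $\lambda$; $E\oplus y=\{e\oplus y:e\in E\}$. $\mathcal B$ is the set of all finite partitions of $G$ into Borel sets, directed by refinement ($\mathcal E_1\prec\mathcal E_2$ if $\mathcal E_2$ is finer than $\mathcal E_1$). For $\mathcal E\in\mathcal B$, $\mathcal E^\ast$ is the set of $E\in\mathcal E$ with $\lambda(E)>0$. $\lambda_2$ is the regular Borel extension of $\lambda\otimes\lambda$ on $G\times G$, and $\nu_{y,\mathcal E}(D)=\sum_{E\in\mathcal E^\ast}\lambda_2\big(D\cap(E\times(E\oplus y))\big)/\lambda(E)$ for Borel $D\subseteq G\times G$. $P(X)$ is the space of regular Borel probability measures on $X$ with the weak$^\ast$ topology (as a subset of $\mathcal C(X)^\ast$). The image measure is $g[\mu](A)=\mu(g^{-1}[A])$. *)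

From HB Require Import structures.
From mathcomp Require Import all_boot all_order all_algebra.
From mathcomp Require Import all_classical all_reals all_analysis.
Set Implicit Arguments. Unset Strict Implicit. Unset Printing Implicit Defensive.
Import Order.TTheory GRing.Theory Num.Theory.
Import numFieldNormedType.Exports.
Local Open Scope classical_set_scope.
Local Open Scope ring_scope.

HB.instance Definition _ (G H : ptopologicalType) := Pointed.on (G * H)%type.

Definition borel (T : ptopologicalType) := g_sigma_algebraType (@open T).

Definition is_compact_group (G : ptopologicalType) (op : G -> G -> G) (e : G)
    (inv : G -> G) : Prop :=
  [/\ (forall x y z, op x (op y z) = op (op x y) z),
      (forall x, op e x = x /\ op x e = x),
      (forall x, op (inv x) x = e /\ op x (inv x) = e),
      continuous (fun p : G * G => op p.1 p.2) /\ continuous inv &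
      hausdorff_space G /\ compact [set: G]].

Definition regular_borel (R : realType) (T : ptopologicalType)
    (mu : set (borel T) -> \bar R) : Prop :=
  forall A : set T, measurable (A : set (borel T)) ->
    mu A = ereal_inf [set mu U | U in [set U : set T | open U /\ A `<=` U]] /\
    mu A = ereal_sup [set mu K | K in [set K : set T | compact K /\ K `<=` A]].

(* Haar probability measure on a compact group: regular, invariant under left
   and right translations (on compact groups Haar measure is bi-invariant). *)
Definition is_haar (R : realType) (G : ptopologicalType) (op : G -> G -> G)
    (lam : set (borel G) -> \bar R) : Prop :=
  [/\ regular_borel lam,
      (forall (x : G) (A : set G), measurable (A : set (borel G)) ->
         lam ((op x) @` A) = lam A) &
      (forall (x : G) (A : set G), measurable (A : set (borel G)) ->
         lam ((fun a => op a x) @` A) = lam A)].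

Definition is_regular_product_ext (R : realType) (G : ptopologicalType)
    (lam : set (borel G) -> \bar R) (lam2 : set (borel (G * G)%type) -> \bar R) : Prop :=
  regular_borel lam2 /\
  forall A B : set G, measurable (A : set (borel G)) -> measurable (B : set (borel G)) ->
    lam2 (A `*` B) = (lam A * lam B)%E.

(* Finite partitions of G into Borel sets, represented by a finite list of blocks
   (distinct positions are disjoint). *)
Definition inP (T : Type) (E : set T) (P : seq (set T)) : Prop :=
  exists2 i, (i < size P)%N & nth set0 P i = E.

Definition borel_partition (G : ptopologicalType) (P : seq (set G)) : Prop :=
  [/\ (forall E, inP E P -> measurable (E : set (borel G))),
      (forall x : G, exists E, inP E P /\ E x) &
      (forall i j, (i < size P)%N -> (j < size P)%N -> i <> j ->
         nth set0 P i `&` nth set0 P j = set0)].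

Definition refines (G : Type) (P2 P1 : seq (set G)) : Prop :=
  forall E2, inP E2 P2 -> exists E1, inP E1 P1 /\ E2 `<=` E1.

Definition partition_net_lim (R : realType) (G : ptopologicalType)
    (u : seq (set G) -> \bar R) (l : \bar R) : Prop :=
  forall eps : R, 0 < eps -> exists P0, borel_partition P0 /\
    forall P, borel_partition P -> refines P P0 -> (`| u P - l | < eps%:E)%E.

Definition rtrans (G : Type) (op : G -> G -> G) (E : set G) (y : G) : set G :=
  (fun a => op a y) @` E.

Definition nu_part (R : realType) (G : ptopologicalType) (op : G -> G -> G)
    (lam : set (borel G) -> \bar R) (lam2 : set (borel (G * G)%type) -> \bar R)
    (y : G) (P : seq (set G)) (D : set (borel (G * G)%type)) : \bar R :=
  (\sum_(E <- P | (0 < lam E)%E)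
     lam2 (D `&` (E `*` rtrans op E y)) * ((fine (lam E))^-1)%:E)%E.

Definition s_map (G : Type) (op : G -> G -> G) (y : G) : G -> G * G :=
  fun x => (x, op x y).

Definition nu_y (R : realType) (G : ptopologicalType) (op : G -> G -> G)
    (lam : set (borel G) -> \bar R) (y : G) : set (borel (G * G)%type) -> \bar R :=
  pushforward lam (s_map op y : borel G -> borel (G * G)%type).

From HB Require Import structures.
From mathcomp Require Import all_boot all_order all_algebra.
From mathcomp Require Import all_classical all_reals all_analysis.
From mathcomp Require Import measurable_realfun lra.
From mathcomp Require finmap.
Import (canonicals, coercions) finmap.
Import Order.TTheory GRing.Theory Num.Theory.
Import numFieldNormedType.Exports.
Local Open Scope classical_set_scope.
Local Open Scope ring_scope.

(* Write B ⊖ y for the preimage of B under x ↦ x ⊕ y.  Once a partition refines {A, ~` A},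
   every block E lies inside or outside A, and since lam2 is a product
   and lam is right invariant, lam2 ((A × B) ∩ (E × (E ⊕ y))) = lam (A ∩ E) lam (E ∩ (B ⊖ y)).
   Hence nu_{y,P} (A × B) = Σ_E lam (E ∩ A ∩ (B ⊖ y)) = lam (A ∩ (B ⊖ y)) = nu_y (A × B)
   exactly.  For continuous f ≥ 0, compactness of G yields finitely many open sets such that
   on every block E not cut by them f (a, b ⊕ y) stays within eps of a constant c.  As
   lam2 (E × (E ⊕ y)) = lam(E)², both the normalised integral of f over E × (E ⊕ y) and the
   integral of f ∘ s_y over E lie in [(c - eps) lam E, (c + eps) lam E], so the two
   integrals differ by at most 2 eps.  A general f is split into positive and negative
   parts, which are controlled by the same open sets. *)

Lemma image_setI_preimage (aT rT : Type) (f : aT -> rT) (A : set aT) (B : set rT) :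
  f @` (A `&` f @^-1` B) = f @` A `&` B.
Proof.
apply/seteqP; split => [_ [x [Ax Bfx] <-]|_ [[x Ax <-] Bfx]]; last by exists x.
by split => //; exists x.
Qed.

Lemma ler_dist_max0 {R : realDomainType} (a b : R) :
  `|Num.max a 0 - Num.max b 0| <= `|a - b|.
Proof.
wlog ba : a b / b <= a.
  move=> h; have [|/ltW ab] := leP b a; first exact: h.
  by rewrite distrC [`|a - b|]distrC h.
rewrite [`|a - b|]ger0_norm ?subr_ge0 // ler_norml.
have [a0|a0] := leP a 0; have [b0|b0] := leP b 0.
all: rewrite ?(max_r a0) ?(max_r b0) ?(max_l (ltW a0)) ?(max_l (ltW b0)); lra.
Qed.

Lemma inv_fine_mulKe (R : realFieldType) (x z : \bar R) : x \is a fin_num -> x != 0%E ->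
  (((fine x)^-1)%:E * (x * z) = z)%E.
Proof.
move=> xf x0; rewrite muleA -{2}(fineK xf) -EFinM mulVf ?mul1e //.
by rewrite fine_eq0.
Qed.

Lemma fine_sum_dist_le {R : realDomainType} {I : Type} (s : seq I) {X Y : I -> \bar R}
    {w : I -> R} :
  (forall i, [/\ X i \is a fin_num, Y i \is a fin_num & `|fine (X i) - fine (Y i)| <= w i]) ->
  [/\ (\sum_(i <- s) X i)%E \is a fin_num, (\sum_(i <- s) Y i)%E \is a fin_num &
      `|fine (\sum_(i <- s) X i)%E - fine (\sum_(i <- s) Y i)%E| <= \sum_(i <- s) w i].
Proof.
move=> XY; have fineE (Z : I -> \bar R) : (forall i, Z i \is a fin_num) ->
    (\sum_(i <- s) Z i)%E = (\sum_(i <- s) fine (Z i))%:E.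
  by move=> Zf; rewrite -sumEFin; apply: eq_bigr => i _; rewrite fineK.
rewrite !fineE => [|i|i]; [|by case: (XY i)..].
split => //; rewrite -sumrB (le_trans (ler_norm_sum _ _ _)) // ler_sum // => i _.
by case: (XY i).
Qed.

Lemma continuous_max0 {T : topologicalType} {R : realType} {f : T -> R} :
  continuous f -> continuous (fun z => Num.max (f z) 0).
Proof. by move=> fc z; apply: continuous_max; [exact: fc | exact: cvg_cst]. Qed.

Section borel_measurability.
Context {T U : ptopologicalType}.

Lemma open_borel_measurable (A : set T) : open A -> measurable (A : set (borel T)).
Proof. by move=> oA; apply: sub_sigma_algebra. Qed.

Lemma continuous_borel_measurable {h : T -> U} : continuous h ->
  measurable_fun setT (h : borel T -> borel U).
Proof.
move=> hc; apply: (@measurability _ _ (borel T) (borel U) _ _ (@open U) erefl) => _ [B oB <-].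
rewrite setTI; exact: open_borel_measurable (open_comp (fun x _ => hc x) oB).
Qed.

Lemma continuous_borel_measurable_EFin {R : realType} {f : T -> R} : continuous f ->
  measurable_fun (setT : set (borel T)) (fun x => (f x)%:E).
Proof.
move=> fc; apply/measurable_EFinP.
apply: (measurability _ (RGenOpens.measurableE R)) => // _ [_ [a [b ->]] <-].
have oab : open `]a, b[%classic by exact: interval_open.
rewrite setTI; exact: open_borel_measurable (open_comp (fun x _ => fc x) oab).
Qed.

End borel_measurability.

Lemma measurable_setX_borel {T U : ptopologicalType} (A : set T) (B : set U) :
  measurable (A : set (borel T)) -> measurable (B : set (borel U)) ->
  measurable (A `*` B : set (borel (T * U)%type)).
Proof.
move=> mA mB; rewrite -[A `*` B]/(fst @^-1` A `&` snd @^-1` B).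
apply: measurableI; rewrite -[X in measurable X]setTI.
  by apply: (@continuous_borel_measurable (T * U)%type T fst _ measurableT _ mA) => p; exact: cvg_fst.
by apply: (@continuous_borel_measurable (T * U)%type U snd _ measurableT _ mB) => p; exact: cvg_snd.
Qed.

Section right_translation.
Context {G : ptopologicalType} {op : G -> G -> G} {e : G} {inv : G -> G}.
Hypothesis hG : is_compact_group op e inv.

Lemma continuous_opr (y : G) : continuous (op^~ y).
Proof.
case: hG => _ _ _ [opc _] _ x.
have xy : (fun a => (a, y)) @ x --> (x, y) by apply: cvg_pair; [exact: cvg_id | exact: cvg_cst].
exact: (continuous_comp xy (opc (x, y))).
Qed.

Lemma rtransE (E : set G) (y : G) : rtrans op E y = op^~ (inv y) @^-1` E.
Proof.
case: hG => opA ope opV _ _; apply/seteqP; split => a /=.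
  by move=> [b Eb <-]; rewrite -opA (proj2 (opV y)) (proj2 (ope b)).
by move=> Ea; exists (op a (inv y)) => //; rewrite -opA (proj1 (opV y)) (proj2 (ope a)).
Qed.

Lemma measurable_opr_preimage (y : G) {B : set G} : measurable (B : set (borel G)) ->
  measurable (op^~ y @^-1` B : set (borel G)).
Proof.
move=> mB; rewrite -[X in measurable X]setTI.
exact: (continuous_borel_measurable (continuous_opr y)) measurableT _ mB.
Qed.

Lemma measurable_rtrans (y : G) {E : set G} : measurable (E : set (borel G)) ->
  measurable (rtrans op E y : set (borel G)).
Proof. by rewrite rtransE; exact: measurable_opr_preimage. Qed.

Lemma continuous_s_map (y : G) : continuous (s_map op y).
Proof. by move=> x; apply: cvg_pair; [exact: cvg_id | exact: continuous_opr]. Qed.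

End right_translation.

Definition undivided {T : Type} (E A : set T) := forall x z, E x -> E z -> A x -> A z.

Section atoms.
Context {T : ptopologicalType} {J : finType}.
Variable S : J -> set T.

Definition atom (g : {ffun J -> bool}) : set T :=
  \bigcap_(i in [set: J]) (if g i then S i else ~` S i).

Definition atoms : seq (set T) := [seq atom g | g <- enum {ffun J -> bool}].

Lemma atom_undivided g i : undivided (atom g) (S i).
Proof.
move=> x z /(_ i I) Sx /(_ i I) Sz.
by case: (g i) Sx Sz => // nSx _ /nSx.
Qed.

Lemma atom_inj g g' x : atom g x -> atom g' x -> g = g'.
Proof.
move=> gx g'x; apply/ffunP => i; move: (gx i I) (g'x i I).
by case: (g i); case: (g' i).
Qed.

Lemma inP_atoms E : inP E atoms -> exists g, E = atom g.
Proof.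
move=> [k]; rewrite size_map => kP <-.
by rewrite (nth_map [ffun=> false]) //; eexists.
Qed.

Lemma atoms_partition : (forall i, measurable (S i : set (borel T))) ->
  borel_partition atoms.
Proof.
move=> mS; split.
- move=> _ /inP_atoms[g ->]; apply: fin_bigcap_measurable; first exact: finite_finset.
  by move=> i _; case: (g i) => //; exact: measurableC.
- move=> x; pose g := [ffun i => `[< S i x >]].
  exists (atom g); split; last by move=> i _; rewrite ffunE; case: asboolP.
  have gE : g \in enum {ffun J -> bool} by rewrite mem_enum.
  exists (index g (enum {ffun J -> bool})); first by rewrite size_map index_mem.
  by rewrite (nth_map [ffun=> false]) ?nth_index ?index_mem.
- move=> i j; rewrite /atoms enumT size_map => iP jP ij.
  have uniq_enum : uniq (Finite.enum {ffun J -> bool}) by rewrite -enumT enum_uniq.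
  rewrite !(nth_map [ffun=> false]) //; apply/seteqP; split => // x [xi xj].
  apply: ij; apply/eqP; rewrite -(nth_uniq [ffun=> false] iP jP uniq_enum).
  by rewrite (atom_inj _ _ _ xi xj).
Qed.

End atoms.

Lemma refines_atoms_undivided {T : ptopologicalType} {J : finType} {S : J -> set T}
    {P : seq (set T)} {E : set T} (i : J) :
  refines P (atoms S) -> inP E P -> undivided E (S i).
Proof.
move=> PS /PS[_ [/inP_atoms[g ->] Eg]] x z Ex Ez.
exact: atom_undivided (Eg _ Ex) (Eg _ Ez).
Qed.

Section partition_blocks.
Context {T : ptopologicalType} {P : seq (set T)}.
Hypothesis bP : borel_partition P.

Lemma measurable_block k : measurable (nth set0 P k : set (borel T)).
Proof.
case: bP => mP _ _; have [kP|kP] := ltnP k (size P); first by apply: mP; exists k.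
by rewrite nth_default.
Qed.

Lemma bigcup_blocks : \bigcup_(k < size P) nth set0 P k = setT.
Proof.
case: bP => _ cP _; apply/seteqP; split => // x _.
by have [_ [[k kP <-] Ex]] := cP x; exists k.
Qed.

Lemma trivIset_blocks : trivIset setT (nth set0 P).
Proof.
case: bP => _ _ dP; apply/trivIsetP => i j _ _ /eqP ij.
have [iP|iP] := ltnP i (size P); last by rewrite nth_default ?set0I.
have [jP|jP] := ltnP j (size P); last by rewrite (nth_default _ jP) setI0.
exact: dP.
Qed.

Lemma measure_blocks_sum {R : realType} (mu : {measure set (borel T) -> \bar R})
    (K : set T) : measurable (K : set (borel T)) ->
  (\sum_(k < size P) mu (nth set0 P k `&` K) = mu K)%E.
Proof.
move=> mK; have UK : \big[setU/set0]_(k < size P) (nth set0 P k `&` K) = K.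
  by rewrite -(bigcup_mkord _ (fun k => nth set0 P k `&` K)) -setI_bigcupl bigcup_blocks setTI.
rewrite -[in RHS]UK (measure_semi_additive_ord_I mu (F := fun k => nth set0 P k `&` K)) //.
- by move=> k _; apply: measurableI => //; exact: measurable_block.
- exact/trivIset_setIr/(sub_trivIset (subsetT _) trivIset_blocks).
- by rewrite UK.
Qed.

Lemma fine_blocks_sum {R : realType} (mu : probability (borel T) R) :
  \sum_(k < size P) fine (mu (nth set0 P k)) = 1.
Proof.
apply: EFin_inj; rewrite -sumEFin -(probability_setT mu).
rewrite -(measure_blocks_sum mu _ measurableT); apply: eq_bigr => k _.
by rewrite setIT fineK // fin_num_measure //; exact: measurable_block.
Qed.

End partition_blocks.

Section integral_lemmas.
Local Open Scope ereal_scope.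
Context {d} {T : measurableType d} {R : realType} {mu : {measure set T -> \bar R}}.

Lemma measure_mul_undivided (A C E : set T) : measurable A -> measurable C ->
  measurable E -> undivided E A ->
  mu (A `&` E) * mu (E `&` C) = mu E * mu (E `&` (A `&` C)).
Proof.
move=> mA mC mE EA; have [[x [Ex Ax]]|nEA] := pselect (exists x, E x /\ A x).
  have EsubA : E `<=` A by move=> z Ez; exact: EA x z Ex Ez Ax.
  by rewrite (setIidr EsubA) setIA (setIidl EsubA).
have AE0 : A `&` E = set0 by apply/seteqP; split => // z [Az Ez]; apply: nEA; exists z.
by rewrite setIA [E `&` A]setIC AE0 set0I !measure0 mul0e mule0.
Qed.

Lemma integral_sandwich {D : set T} {h : T -> R} {l u m : R} :
  measurable D -> mu D = m%:E -> measurable_fun D (EFin \o h) ->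
  (forall x, D x -> 0 <= h x)%R -> (forall x, D x -> l <= h x <= u)%R ->
  exists2 r : R, \int[mu]_(x in D) (h x)%:E = r%:E & (l * m <= r <= u * m)%R.
Proof.
move=> mD muD mh h0 hlu.
have m0 : (0 <= m)%R by rewrite -lee_fin -muD.
have I0 : 0 <= \int[mu]_(x in D) (h x)%:E.
  by apply: integral_ge0 => x Dx; rewrite lee_fin h0.
have Iu : \int[mu]_(x in D) (h x)%:E <= (u * m)%:E.
  rewrite EFinM -muD -integral_cst //; apply: ge0_le_integral => // x Dx.
  by rewrite lee_fin; case/andP: (hlu x Dx).
have lI : (l * m)%:E <= \int[mu]_(x in D) (h x)%:E.
  have [l0|l0] := leP 0%R l; last first.
    by apply: le_trans I0; rewrite lee_fin mulr_le0_ge0 // ltW.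
  rewrite EFinM -muD -integral_cst //; apply: ge0_le_integral => // x Dx.
  by rewrite lee_fin; case/andP: (hlu x Dx).
have Ifin : \int[mu]_(x in D) (h x)%:E \is a fin_num.
  by rewrite ge0_fin_numE // (le_lt_trans Iu) ?ltry.
by exists (fine (\int[mu]_(x in D) (h x)%:E)); rewrite ?fineK // -!lee_fin fineK ?lI.
Qed.

Lemma integral_mrestr_setT (D : set T) (mD : measurable D) (f : T -> \bar R) :
  measurable_fun setT f -> (forall x, 0 <= f x) ->
  \int[mrestr mu mD]_(x in setT) f x = \int[mrestr mu mD]_(x in D) f x.
Proof.
move=> mf f0; rewrite -(setUv D) ge0_integral_setU //.
- rewrite (@null_set_integral _ _ _ (mrestr mu mD) (~` D)) ?adde0 //.
  + exact: measurableC.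
  + exact: measurable_funS mf.
  + by change (mu (~` D `&` D) = 0); rewrite setICl measure0.
- exact: measurableC.
- by rewrite setUv.
- by rewrite disj_set2E setICr.
Qed.

Lemma integral_max0 (f : T -> R) :
  \int[mu]_(x in setT) (f x)%:E =
  \int[mu]_(x in setT) (Num.max (f x) 0)%:E -
  \int[mu]_(x in setT) (Num.max (- f x) 0)%:E.
Proof.
rewrite integralE; congr (_ - _); apply: eq_integral => x _.
  by rewrite funeposE EFin_max.
by rewrite funenegE EFin_max EFinN.
Qed.

End integral_lemmas.

Section nu_y_approximation.
Local Open Scope ereal_scope.
Context {R : realType} {G : ptopologicalType} {op : G -> G -> G} {e : G} {inv : G -> G}.
Hypothesis hG : is_compact_group op e inv.
Context {lam : probability (borel G) R}.
Hypothesis hlam : is_haar op lam.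
Context {lam2 : {measure set (borel (G * G)%type) -> \bar R}}.
Hypothesis hlam2 : is_regular_product_ext lam lam2.
Variable y : G.

Definition shift_rect (E : set G) : set (G * G) := E `*` rtrans op E y.

Lemma measurable_shift_rect {E : set G} : measurable (E : set (borel G)) ->
  measurable (shift_rect E : set (borel (G * G)%type)).
Proof. by move=> mE; apply: measurable_setX_borel mE (measurable_rtrans hG y mE). Qed.

Lemma nu_part_nth P (D : set (G * G)) :
  nu_part op lam lam2 y P D =
  \sum_(k < size P) ((fine (lam (nth set0 P k)))^-1)%:E * lam2 (D `&` shift_rect (nth set0 P k)).
Proof.
rewrite /nu_part (big_nth set0) big_mkord big_mkcond /=; apply: eq_bigr => k _.
case: ifPn => [_|]; first by rewrite muleC.
by rewrite lt_def measure_ge0 andbT negbK => /eqP ->; rewrite invr0 mul0e.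
Qed.

Lemma lam2_rect_shift (A B E : set G) : measurable (A : set (borel G)) ->
  measurable (B : set (borel G)) -> measurable (E : set (borel G)) ->
  lam2 ((A `*` B) `&` shift_rect E) = lam (A `&` E) * lam (E `&` op^~ y @^-1` B).
Proof.
move=> mA mB mE; have mEB := measurableI _ _ mE (measurable_opr_preimage hG y mB).
have mEy := measurable_rtrans hG y mE.
rewrite /shift_rect -setXI (proj2 hlam2); [|exact: measurableI..].
by rewrite [B `&` _]setIC /rtrans -image_setI_preimage; case: hlam => _ _ ->.
Qed.

Lemma nu_part_rect_block (A B E : set G) : measurable (A : set (borel G)) ->
  measurable (B : set (borel G)) -> measurable (E : set (borel G)) -> undivided E A ->
  ((fine (lam E))^-1)%:E * lam2 ((A `*` B) `&` shift_rect E) =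
  lam (E `&` (A `&` op^~ y @^-1` B)).
Proof.
move=> mA mB mE EA; have mB' := measurable_opr_preimage hG y mB.
rewrite lam2_rect_shift // measure_mul_undivided //.
have [E0|E0] := eqVneq (lam E) 0; last by rewrite inv_fine_mulKe // fin_num_measure.
have mEK : measurable (E `&` (A `&` op^~ y @^-1` B) : set (borel G)).
  by apply: measurableI => //; exact: measurableI.
have EK0 := subset_measure0 mEK mE (@subIsetl _ _ _) E0.
by rewrite E0 EK0 !mule0; exact/esym/EK0.
Qed.

Lemma nu_part_rect (A B : set G) P : measurable (A : set (borel G)) ->
  measurable (B : set (borel G)) -> borel_partition P ->
  refines P (atoms (fun _ : unit => A)) ->
  nu_part op lam lam2 y P (A `*` B) = nu_y op lam y (A `*` B).
Proof.
move=> mA mB bP PA; rewrite nu_part_nth.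
rewrite -[RHS]/(lam (A `&` op^~ y @^-1` B)) -(measure_blocks_sum bP lam); last first.
  exact: measurableI mA (measurable_opr_preimage hG y mB).
apply: eq_bigr => k _; apply: nu_part_rect_block => //; first exact: measurable_block.
by apply: (refines_atoms_undivided tt PA); exists k.
Qed.

Lemma nu_part_rect_lim (A B : set G) : measurable (A : set (borel G)) ->
  measurable (B : set (borel G)) ->
  partition_net_lim (fun P => nu_part op lam lam2 y P (A `*` B)) (nu_y op lam y (A `*` B)).
Proof.
move=> mA mB eps eps0; exists (atoms (fun _ : unit => A)); split.
  exact: atoms_partition.
move=> P bP PA; rewrite nu_part_rect // subee ?abse0 ?lte_fin //.
apply: fin_num_measure; exact: measurableI mA (measurable_opr_preimage hG y mB).
Qed.

Lemma weight_ge0 (E : set G) : (0 <= (fine (lam E))^-1)%R.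
Proof. by rewrite invr_ge0 fine_ge0. Qed.

Definition block_measure {P} (bP : borel_partition P) (k : nat) :
    {measure set (borel (G * G)%type) -> \bar R} :=
  mscale (NngNum (weight_ge0 (nth set0 P k)))
    (mrestr lam2 (measurable_shift_rect (measurable_block bP k))).

Lemma nu_part_msum {P} (bP : borel_partition P) :
  nu_part op lam lam2 y P = msum (block_measure bP) (size P).
Proof. by apply/funext => D; rewrite nu_part_nth. Qed.

Lemma integral_nu_part {P} (bP : borel_partition P) {g : G * G -> R} :
  continuous g -> (forall z, 0 <= g z)%R ->
  \int[nu_part op lam lam2 y P]_(z in setT) (g z)%:E =
  \sum_(k < size P) ((fine (lam (nth set0 P k)))^-1)%:E *
    \int[mrestr lam2 (measurable_shift_rect (measurable_block bP k))]_(z in shift_rect (nth set0 P k))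
      (g z)%:E.
Proof.
move=> gc g0; have mg := continuous_borel_measurable_EFin gc.
rewrite nu_part_msum ge0_integral_measure_sum //; last by move=> z _; rewrite lee_fin.
apply: eq_bigr => k _; rewrite ge0_integral_mscale //; last by move=> z _; rewrite lee_fin.
by rewrite integral_mrestr_setT // => z; rewrite lee_fin.
Qed.

Lemma measurable_comp_s_map {g : G * G -> R} : continuous g ->
  measurable_fun setT (fun x : borel G => (g (s_map op y x))%:E).
Proof.
move=> gc; apply: continuous_borel_measurable_EFin => x.
exact: continuous_comp (continuous_s_map hG y x) (gc _).
Qed.

Lemma integral_nu_y {P} (bP : borel_partition P) {g : G * G -> R} :
  continuous g -> (forall z, 0 <= g z)%R ->
  \int[nu_y op lam y]_(z in setT) (g z)%:E =
  \sum_(k < size P) \int[lam]_(x in nth set0 P k) (g (s_map op y x))%:E.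
Proof.
move=> gc g0; have ms := continuous_borel_measurable (continuous_s_map hG y).
rewrite /nu_y (ge0_integral_pushforward ms) //; last 2 first.
- exact: continuous_borel_measurable_EFin.
- by move=> z _; rewrite lee_fin.
rewrite preimage_setT -(bigcup_blocks bP) bigcup_mkord -(big_mkord xpredT).
rewrite ge0_integral_bigsetU ?big_mkord //.
- exact: measurable_block bP.
- exact: iota_uniq.
- exact: sub_trivIset (subsetT _) (trivIset_blocks bP).
- exact: measurable_funTS (measurable_comp_s_map gc).
- by move=> x _; rewrite lee_fin.
Qed.

Lemma nu_y_block_sandwich {g : G * G -> R} {E : set G} {c eps : R} :
  continuous g -> (forall z, 0 <= g z)%R -> measurable (E : set (borel G)) ->
  (forall a b, E a -> E b -> `|g (a, op b y) - c| <= eps)%R ->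
  exists2 r : R, \int[lam]_(x in E) (g (s_map op y x))%:E = r%:E &
    ((c - eps) * fine (lam E) <= r <= (c + eps) * fine (lam E))%R.
Proof.
move=> gc g0 mE gE; apply: integral_sandwich => //.
- by rewrite fineK // fin_num_measure.
- exact: measurable_funTS (measurable_comp_s_map gc).
- by move=> x Ex; rewrite -ler_distl; exact: gE.
Qed.

Lemma nu_part_block_sandwich {g : G * G -> R} {E : set G} {c eps : R}
    (mE : measurable (E : set (borel G))) :
  continuous g -> (forall z, 0 <= g z)%R ->
  (forall a b, E a -> E b -> `|g (a, op b y) - c| <= eps)%R ->
  exists2 r : R, ((fine (lam E))^-1)%:E *
      \int[mrestr lam2 (measurable_shift_rect mE)]_(z in shift_rect E) (g z)%:E = r%:E &
    ((c - eps) * fine (lam E) <= r <= (c + eps) * fine (lam E))%R.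
Proof.
move=> gc g0 gE.
have lam2E : mrestr lam2 (measurable_shift_rect mE) (shift_rect E) =
    (fine (lam E) * fine (lam E))%:E.
  rewrite /mrestr setIid /shift_rect (proj2 hlam2 _ _ mE (measurable_rtrans hG y mE)).
  rewrite /rtrans; case: hlam => _ _ -> //.
  by rewrite EFinM fineK // fin_num_measure.
have gD : forall z, shift_rect E z -> (c - eps <= g z <= c + eps)%R.
  by move=> [a b] [/= Ea [b' Eb' <-]]; rewrite -ler_distl; exact: gE.
have [r -> /andP[lr ru]] := integral_sandwich (measurable_shift_rect mE) lam2E
  (measurable_funTS (continuous_borel_measurable_EFin gc)) (fun z _ => g0 z) gD.
set m := fine (lam E) in lr ru *.
have scale a : (a * m = m^-1 * (a * (m * m)))%R.
  have [->|m0] := eqVneq m 0%R; first by rewrite !(mulr0, mul0r).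
  by rewrite mulrCA mulKf.
exists (m^-1 * r)%R; first by rewrite EFinM.
have m0 : (0 <= m^-1)%R by rewrite invr_ge0 fine_ge0.
by apply/andP; split; rewrite scale; apply: ler_wpM2l.
Qed.

Definition nearly_constant (g : G * G -> R) (eps : R) (E : set G) :=
  exists c : R, forall a b, E a -> E b -> (`|g (a, op b y) - c| <= eps)%R.

Lemma nearly_constant_max0 {g eps E} : nearly_constant g eps E ->
  nearly_constant (fun z => Num.max (g z) 0%R) eps E.
Proof.
move=> [c gE]; exists (Num.max c 0%R) => a b Ea Eb.
exact: le_trans (ler_dist_max0 _ _) (gE a b Ea Eb).
Qed.

Lemma nearly_constant_opp {g eps E} : nearly_constant g eps E ->
  nearly_constant (fun z => - g z)%R eps E.
Proof. by move=> [c gE]; exists (- c)%R => a b Ea Eb; rewrite -opprD normrN gE. Qed.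

Lemma block_integrals_close {g : G * G -> R} {eps : R} {E : set G}
    (mE : measurable (E : set (borel G))) :
  continuous g -> (forall z, 0 <= g z)%R -> nearly_constant g eps E ->
  [/\ ((fine (lam E))^-1)%:E *
        \int[mrestr lam2 (measurable_shift_rect mE)]_(z in shift_rect E) (g z)%:E \is a fin_num,
      \int[lam]_(x in E) (g (s_map op y x))%:E \is a fin_num &
      (`|fine (((fine (lam E))^-1)%:E *
          \int[mrestr lam2 (measurable_shift_rect mE)]_(z in shift_rect E) (g z)%:E) -
        fine (\int[lam]_(x in E) (g (s_map op y x))%:E)| <= 2 * eps * fine (lam E))%R].
Proof.
move=> gc g0 [c gE].
have [x -> /andP[xl xu]] := nu_part_block_sandwich mE gc g0 gE.
have [x' -> /andP[x'l x'u]] := nu_y_block_sandwich gc g0 mE gE.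
by split => //=; rewrite ler_norml; apply/andP; split; lra.
Qed.

Lemma ge0_integrals_close {P} (bP : borel_partition P) {g : G * G -> R} {eps : R} :
  continuous g -> (forall z, 0 <= g z)%R -> (forall E, inP E P -> nearly_constant g eps E) ->
  [/\ \int[nu_part op lam lam2 y P]_(z in setT) (g z)%:E \is a fin_num,
      \int[nu_y op lam y]_(z in setT) (g z)%:E \is a fin_num &
      (`|fine (\int[nu_part op lam lam2 y P]_(z in setT) (g z)%:E) -
        fine (\int[nu_y op lam y]_(z in setT) (g z)%:E)| <= 2 * eps)%R].
Proof.
move=> gc g0 gP; rewrite (integral_nu_part bP gc g0) (integral_nu_y bP gc g0).
have := fine_sum_dist_le (index_enum 'I_(size P)) (fun k => block_integrals_close
  (measurable_block bP k) gc g0 (gP _ (ex_intro2 _ _ (nat_of_ord k) (ltn_ord k) erefl))).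
by rewrite -mulr_sumr (fine_blocks_sum bP) mulr1.
Qed.

Lemma continuous_local_oscillation {f : G * G -> R} {eps : R} (x : G) :
  continuous f -> (0 < eps)%R ->
  exists W : set G, [/\ open W, W x &
    forall a b, W a -> W b -> (`|f (x, op x y) - f (a, op b y)| < eps)%R].
Proof.
move=> fc eps0; have [[Q V] [/= Qx Vxy] QV] := cvgr_dist_lt _ _ (fc (x, op x y)) _ eps0.
exists (Q° `&` op^~ y @^-1` V°); split.
- apply: openI; first exact: open_interior.
  by apply: open_comp => [z _|]; [exact: continuous_opr hG y z | exact: open_interior].
- by split; [exact: nbhs_singleton (nbhs_interior Qx) | exact: nbhs_singleton (nbhs_interior Vxy)].
- by move=> a b [Qa _] [_ Vb]; apply: (QV (a, op b y)); split; exact: interior_subset.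
Qed.

Lemma nearly_constant_cover {f : G * G -> R} {eps : R} : continuous f -> (0 < eps)%R ->
  exists (J : finType) (S : J -> set G), (forall i, open (S i)) /\
    forall E, (forall i, undivided E (S i)) -> nearly_constant f eps E.
Proof.
move=> fc eps0.
have [W hW] := choice (fun x => continuous_local_oscillation x fc eps0).
have [D _ DW] : finite_subset_cover setT W setT.
  case: hG => _ _ _ _ [_]; rewrite compact_cover; apply => [x _|x _].
    by case: (hW x).
  by exists x => //; case: (hW x).
exists D, (fun i => W (val i)); split => [i|E ES]; first by case: (hW (val i)).
have [[x0 Ex0]|nE] := pselect (exists x, E x); last first.
  by exists 0%R => a b Ea; exfalso; apply: nE; exists a.
have [i Di Wix0] := DW x0 Logic.I.
have EsubW z : E z -> W i z by move=> Ez; exact: (ES (finmap.FSetSub Di)) x0 z Ex0 Ez Wix0.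
exists (f (i, op i y)) => a b Ea Eb; case: (hW i) => _ _ osc.
by rewrite distrC; apply/ltW/osc; exact: EsubW.
Qed.

(* HB registers a pushforward as a measure only given a proof that the map is measurable. *)
Let nu_y_measure : {measure set (borel (G * G)%type) -> \bar R} :=
  measure_function_pushforward__canonical__measure_function_Measure lam
    (continuous_borel_measurable (continuous_s_map hG y)).

Lemma integral_nu_part_lim (f : G * G -> R) : continuous f ->
  partition_net_lim (fun P => \int[nu_part op lam lam2 y P]_(z in setT) (f z)%:E)
    (\int[nu_y op lam y]_(z in setT) (f z)%:E).
Proof.
move=> fc eps eps0; have eps8 : (0 < eps / 8)%R by rewrite divr_gt0.
have [J [S [oS fS]]] := nearly_constant_cover fc eps8.
exists (atoms S); split => [|P bP PS].
  by apply: atoms_partition => i; exact: open_borel_measurable.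
have fP E : inP E P -> nearly_constant f (eps / 8) E.
  by move=> PE; apply: fS => i; exact: refines_atoms_undivided PS PE.
have max0_ge0 (r : R) : (0 <= Num.max r 0)%R by rewrite le_max lexx orbT.
have [Ip Jp close_p] := ge0_integrals_close bP (continuous_max0 fc) (fun z => max0_ge0 _)
  (fun E PE => nearly_constant_max0 (fP E PE)).
have [In Jn close_n] := ge0_integrals_close bP (continuous_max0 (fun z => continuousN (fc z)))
  (fun z => max0_ge0 _) (fun E PE => nearly_constant_max0 (nearly_constant_opp (fP E PE))).
rewrite (nu_part_msum bP) in Ip In close_p close_n *.
rewrite integral_max0 (integral_max0 (mu := nu_y_measure)).
rewrite -(fineK Ip) -(fineK In) -(fineK Jp) -(fineK Jn) -!EFinB abse_EFin lte_fin.
move: close_p close_n; rewrite ltr_norml !ler_norml => /andP[? ?] /andP[? ?].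
by apply/andP; split; lra.
Qed.

End nu_y_approximation.

Theorem lemma3p3 (R : realType) (G : ptopologicalType) (op : G -> G -> G)
    (e : G) (inv : G -> G) (hG : is_compact_group op e inv)
    (lam : probability (borel G) R) (hlam : is_haar op lam)
    (lam2 : {measure set (borel (G * G)%type) -> \bar R})
    (hlam2 : is_regular_product_ext lam lam2)
    (y : G) :
  (forall A B : set G,
     measurable (A : set (borel G)) -> measurable (B : set (borel G)) ->
     partition_net_lim (fun P => nu_part op lam lam2 y P (A `*` B))
                       (nu_y op lam y (A `*` B))) /\
  (forall f : G * G -> R, continuous f ->
     partition_net_lim
       (fun P => integral (nu_part op lam lam2 y P) setT (fun z : borel (G * G)%type => (f z)%:E))
       (integral (nu_y op lam y) setT (fun z : borel (G * G)%type => (f z)%:E))).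
Proof.
split; [exact (nu_part_rect_lim hG hlam hlam2 y) | exact (integral_nu_part_lim hG hlam hlam2 y)].
Qed.
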